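(* Assume $n_i(1)+n_i(0)>0$ for every link $i$. A point $\xi\in\Xi$ satisfies $\partial L(\xi)/\partial\xi=0$ if and only if, for every link $i\in E$, $$\xi_i=(1-r_i)+r_i\cdot\mathbf 1(i\notin\mathscr S)\cdot\prod_{j\in B_i}\xi_j .$$ In particular $\xi_i=1-r_i$ for $i\in\mathscr S$, and for a non-root link $i$, $\pi_i:=\prod_{j\in B_i}\xi_j$ satisfies $\pi_i=\prod_{j\in B_i}\big[(1-r_j)+r_j\pi_i\big]$.
   Context: Network: a finite set of directed links $E=\{1,\dots,m\}$ between nodes, forming a directed acyclic graph. For a link $i$, $C_i$ is the set of links whose tail is the head of $i$ (child links); $B_i$ is the set of links having the same tail as $i$ (brother links, including $i$ itself); $F_i$ is the set of links whose head is the tail of $i$ (parent links). A link $i$ is a leaf link if $C_i=\emptyset$; $R_i$ is the set of leaf links that are descendants of $i$ (including $i$ itself if $i$ is a leaf). The network is covered by $K\ge1$ multicast trees $T_1,\dots,T_K$: $T_k$ has a root link $S_k$ whose tail is a source node with no incoming link ($F_{S_k}=\emptyset$); its link set $E_k$ consists of $S_k$ and all descendants of $S_k$; every link $i\in E_k\setminus\{S_k\}$ has exactly one parent link in $E_k$, denoted $f^{(k)}_i\in F_i\cap E_k$; every link belongs to some $E_k$; each root link $S_k$ belongs only to $E_k$. $\mathscr S=\{S_1,\dots,S_K\}$. Loss model: each link $i$ has loss rate $\theta_i\in(0,1)$. From the source of tree $T_k$, $n_k$ probes are sent; $X^{(k,t)}_i=1$ if probe $t$ of tree $k$ reached the head of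 link $i\in E_k$; a probe at the tail of link $i$ traverses it with probability $1-\theta_i$, independently across links, probes and trees; only leaf links are observed. Internal views: $Y^{(k,t)}_i=\max_{r\in R_i}X^{(k,t)}_r$ for $i\in E_k$; $n_{k,i}(1)=\sum_{t=1}^{n_k}Y^{(k,t)}_i$ for $i\in E_k$ and $0$ otherwise; $n_{k,S_k}(0)=n_k-n_{k,S_k}(1)$, $n_{k,i}(0)=n_{k,f^{(k)}_i}(1)-n_{k,i}(1)$ for $i\in E_k\setminus\{S_k\}$, and $0$ for $i\notin E_k$; $n_i(1)=\sum_k n_{k,i}(1)$, $n_i(0)=\sum_k n_{k,i}(0)$; $r_i=n_i(1)/(n_i(1)+n_i(0))$. $\Xi$ is the set of $\xi\in(0,1)^m$ with $\xi_i>\prod_{j\in C_i}\xi_j$ for every non-leaf link $i$, and the log-likelihood of the observed data in terms of $\xi\in\Xi$ is $L(\xi)=\sum_{i\in E}\big[n_i(1)\log\frac{1-\xi_i}{1-\prod_{j\in C_i}\xi_j}+n_i(0)\log\xi_i\big]$, with the empty product over $C_i=\emptyset$ equal to $0$. *)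

From Stdlib Require Import Reals List Arith Relations ClassicalEpsilon.
Import ListNotations.
Open Scope R_scope.

Definition sumR (n : nat) (f : nat -> R) : R := fold_right Rplus 0 (map f (seq 0 n)).
Definition prodR (n : nat) (f : nat -> R) : R := fold_right Rmult 1 (map f (seq 0 n)).

Definition ind (P : Prop) : R :=
  if excluded_middle_informative P then 1 else 0.

(* Network structure: links are 0..m-1 (the paper's 1..m), with tail/head
   nodes (nodes are nats); K trees with root links S k (k < K); par k i is
   the parent link f^{(k)}_i of i in tree k. *)
Record Net := mkNet {
  m : nat;
  ltail : nat -> nat;
  lhead : nat -> nat;
  K : nat;
  S : nat -> nat;
  par : nat -> nat -> nat
}.

Section NetDefs.
Variable N : Net.

Definition child (i j : nat) : Prop := (i < m N)%nat /\ (j < m N)%nat /\ ltail N j = lhead N i.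

Definition desc_eq : nat -> nat -> Prop := clos_refl_trans nat child.

Definition leafb (i : nat) : bool :=
  forallb (fun j => negb (Nat.eqb (ltail N j) (lhead N i))) (seq 0 (m N)).

Definition inE (k i : nat) : Prop := desc_eq (S N k) i.

Definition isRoot (i : nat) : bool := existsb (fun k => Nat.eqb (S N k) i) (seq 0 (K N)).

Definition valid_net : Prop :=
  (forall i, ~ clos_trans nat child i i) /\
  (1 <= K N)%nat /\
  (forall k, (k < K N)%nat -> (S N k < m N)%nat) /\
  (forall k j, (k < K N)%nat -> (j < m N)%nat -> lhead N j <> ltail N (S N k)) /\
  (forall k i, (k < K N)%nat -> inE k i -> i <> S N k ->
      ((par N k i < m N)%nat /\ lhead N (par N k i) = ltail N i /\ inE k (par N k i)) /\
      (forall g, (g < m N)%nat -> lhead N g = ltail N i -> inE k g -> g = par N k i)) /\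
  (forall i, (i < m N)%nat -> exists k, (k < K N)%nat /\ inE k i) /\
  (forall k l, (k < K N)%nat -> (l < K N)%nat -> inE l (S N k) -> l = k).

Variable nprobe : nat -> nat.
Variable X : nat -> nat -> nat -> bool.  (* X k t r : probe t of tree k reached head of r *)

Definition Y (k t i : nat) : R :=
  ind (exists r, (r < m N)%nat /\ leafb r = true /\ desc_eq i r /\ X k t r = true).

Definition nk1 (k i : nat) : R :=
  if excluded_middle_informative (inE k i)
  then sumR (nprobe k) (fun t => Y k t i) else 0.

Definition nk0 (k i : nat) : R :=
  if excluded_middle_informative (inE k i)
  then (if Nat.eqb i (S N k) then INR (nprobe k) - nk1 k i
        else nk1 k (par N k i) - nk1 k i)
  else 0.

Definition n1 (i : nat) : R := sumR (K N) (fun k => nk1 k i).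
Definition n0 (i : nat) : R := sumR (K N) (fun k => nk0 k i).
Definition rr (i : nat) : R := n1 i / (n1 i + n0 i).

Definition prodB (xi : nat -> R) (i : nat) : R :=
  prodR (m N) (fun j => if Nat.eqb (ltail N j) (ltail N i) then xi j else 1).

(* prod_{j in C_i} xi_j, with the empty product (leaf) equal to 0 *)
Definition prodC (xi : nat -> R) (i : nat) : R :=
  if leafb i then 0
  else prodR (m N) (fun j => if Nat.eqb (ltail N j) (lhead N i) then xi j else 1).

Definition InXi (xi : nat -> R) : Prop :=
  forall i, (i < m N)%nat ->
    0 < xi i < 1 /\ (leafb i = false -> xi i > prodC xi i).

Definition loglik (xi : nat -> R) : R :=
  sumR (m N) (fun i => n1 i * ln ((1 - xi i) / (1 - prodC xi i)) + n0 i * ln (xi i)).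

Definition upd (xi : nat -> R) (i : nat) (x : R) : nat -> R :=
  fun j => if Nat.eqb j i then x else xi j.

Definition stationary (xi : nat -> R) : Prop :=
  forall i, (i < m N)%nat -> derivable_pt_lim (fun x => loglik (upd xi i x)) (xi i) 0.

End NetDefs.

(** Only the terms of [L] at [i] and at the parent links of [i] (those [l] with
    [i] in [C_l]) depend on [xi_i], and the latter through [prod_{C_l} xi]
    [= xi_i * q] with [q] the product over the other brothers of [i].  Summing
    the parents' counts [n_l(1)] over the trees gives [n_i(1) + n_i(0)]
    (zero for a root link), since [n_{k,i}(0)] is defined as
    [n_{k,f_i}(1) - n_{k,i}(1)].  Hence
    [dL/dxi_i = -a/(1-x) + b/x + 1(i not root) (a+b) q/(1-xq)] with [a = n_i(1)],
    [b = n_i(0)], [x = xi_i], and clearing denominators turns its vanishing into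
    [x = (1 - r_i) + r_i 1(i not root) x q]. *)

From Coquelicot Require Import Coquelicot.
From Pilot Require Import Defs.
From Stdlib Require Import Reals List Relations Lra Lia ClassicalEpsilon.
Open Scope R_scope.

Lemma sumR_S n f : sumR (Datatypes.S n) f = sumR n f + f n.
Proof.
  unfold sumR. rewrite seq_S, map_app, fold_right_app. simpl.
  generalize (f n). induction (map f (seq 0 n)) as [|a l IH]; intros; simpl; [lra|].
  rewrite IH. lra.
Qed.

Lemma prodR_S n f : prodR (Datatypes.S n) f = prodR n f * f n.
Proof.
  unfold prodR. rewrite seq_S, map_app, fold_right_app. simpl.
  generalize (f n). induction (map f (seq 0 n)) as [|a l IH]; intros; simpl; [lra|].
  rewrite IH. lra.
Qed.

Lemma sumR_ext n f g : (forall j, (j < n)%nat -> f j = g j) -> sumR n f = sumR n g.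
Proof.
  induction n as [|n IH]; intros H; [reflexivity|].
  rewrite !sumR_S, IH by (intros; apply H; lia). rewrite H by lia. reflexivity.
Qed.

Lemma prodR_ext n f g : (forall j, (j < n)%nat -> f j = g j) -> prodR n f = prodR n g.
Proof.
  induction n as [|n IH]; intros H; [reflexivity|].
  rewrite !prodR_S, IH by (intros; apply H; lia). rewrite H by lia. reflexivity.
Qed.

Lemma sumR_add n f g : sumR n (fun j => f j + g j) = sumR n f + sumR n g.
Proof. induction n as [|n IH]; [unfold sumR; simpl; lra|]. rewrite !sumR_S, IH. lra. Qed.

Lemma sumR_mull n c f : sumR n (fun j => c * f j) = c * sumR n f.
Proof. induction n as [|n IH]; [unfold sumR; simpl; lra|]. rewrite !sumR_S, IH. lra. Qed.

Lemma sumR_eq0 n f : (forall j, (j < n)%nat -> f j = 0) -> sumR n f = 0.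
Proof.
  induction n as [|n IH]; intros H; [reflexivity|].
  rewrite sumR_S, IH by (intros; apply H; lia). rewrite H by lia. ring.
Qed.

Lemma sumR_delta n i f : (i < n)%nat -> sumR n (fun j => if Nat.eqb j i then f j else 0) = f i.
Proof.
  induction n as [|n IH]; intros Hi; [lia|]. rewrite sumR_S.
  destruct (Nat.eq_dec i n) as [->|Hne].
  - rewrite Nat.eqb_refl, sumR_eq0; [lra|].
    intros j Hj. destruct (Nat.eqb_spec j n); [lia|reflexivity].
  - rewrite IH by lia. destruct (Nat.eqb_spec n i); [lia|lra].
Qed.

Lemma sumR_exchange n k f :
  sumR n (fun l => sumR k (fun j => f j l)) = sumR k (fun j => sumR n (fun l => f j l)).
Proof.
  induction n as [|n IH].
  - symmetry. apply sumR_eq0. intros; reflexivity.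
  - rewrite sumR_S, IH, <- sumR_add. apply sumR_ext. intros. rewrite sumR_S. reflexivity.
Qed.

Lemma prodR_extract n i f : (i < n)%nat ->
  prodR n f = f i * prodR n (fun j => if Nat.eqb j i then 1 else f j).
Proof.
  induction n as [|n IH]; intros Hi; [lia|]. rewrite !prodR_S.
  destruct (Nat.eq_dec i n) as [->|Hne].
  - rewrite Nat.eqb_refl, (prodR_ext n (fun j => if Nat.eqb j n then 1 else f j) f); [lra|].
    intros j Hj. destruct (Nat.eqb_spec j n); [lia|reflexivity].
  - rewrite IH by lia. destruct (Nat.eqb_spec n i); [lia|lra].
Qed.

Lemma prodR_in_01 n f : (forall j, (j < n)%nat -> 0 < f j <= 1) -> 0 < prodR n f <= 1.
Proof.
  induction n as [|n IH]; intros H; [unfold prodR; simpl; lra|]. rewrite prodR_S.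
  destruct IH as [IH0 IH1]; [intros; apply H; lia|].
  destruct (H n) as [Hf0 Hf1]; [lia|].
  split; [apply Rmult_lt_0_compat; lra|].
  rewrite <- (Rmult_1_r 1). apply Rmult_le_compat; lra.
Qed.

Lemma is_derive_sumR n (g : nat -> R -> R) d x :
  (forall l, (l < n)%nat -> is_derive (g l) x (d l)) ->
  is_derive (fun y => sumR n (fun l => g l y)) x (sumR n d).
Proof.
  induction n as [|n IH]; intros H.
  - apply (is_derive_const 0).
  - rewrite sumR_S. apply (is_derive_ext (fun y => plus (sumR n (fun l => g l y)) (g n y))).
    { intros. rewrite sumR_S. reflexivity. }
    apply (is_derive_plus _ _ _ (sumR n d) (d n)); [apply IH; intros|]; apply H; lia.
Qed.

Lemma score_eq0_iff a b x p : 0 < a + b -> 0 < x < 1 -> 0 <= p -> x * p < 1 ->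
  - a / (1 - x) + b / x + (a + b) * (p / (1 - x * p)) = 0 <->
  x = (1 - a / (a + b)) + a / (a + b) * (x * p).
Proof.
  intros Hab Hx Hp Hxp.
  set (E := b + a * x * p - (a + b) * x).
  assert (HL : - a / (1 - x) + b / x + (a + b) * (p / (1 - x * p))
               = E * / (x * (1 - x) * (1 - x * p))) by (unfold E; field; repeat split; lra).
  assert (HR : x - ((1 - a / (a + b)) + a / (a + b) * (x * p)) = - E * / (a + b))
    by (unfold E; field; repeat split; lra).
  assert (Hd : / (x * (1 - x) * (1 - x * p)) <> 0).
  { apply Rinv_neq_0_compat. repeat (apply Rmult_integral_contrapositive; split); lra. }
  assert (Hab' : / (a + b) <> 0) by (apply Rinv_neq_0_compat; lra).
  rewrite HL. split; intros H.
  - destruct (Rmult_integral _ _ H) as [HE|]; [|contradiction].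
    rewrite HE in HR. lra.
  - assert (HE : - E * / (a + b) = 0) by lra.
    destruct (Rmult_integral _ _ HE) as [HE'|]; [|contradiction].
    replace E with 0 by lra. ring.
Qed.

Section Network.

Variable N : Net.
Hypothesis HN : valid_net N.

Lemma lhead_neq_ltail i : (i < m N)%nat -> lhead N i <> ltail N i.
Proof. intros Hi E. destruct HN as [Hacyc _]. apply (Hacyc i), t_step. repeat split; auto. Qed.

Lemma isRootP i : isRoot N i = true <-> exists k, (k < K N)%nat /\ S N k = i.
Proof.
  unfold isRoot. rewrite existsb_exists.
  split; intros [k [Hk E]]; exists k; rewrite in_seq in *; split; try lia.
  - apply Nat.eqb_eq; exact E.
  - apply Nat.eqb_eq; exact E.
Qed.

Lemma leafb_parent l i : (i < m N)%nat -> ltail N i = lhead N l -> leafb N l = false.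
Proof.
  intros Hi E. unfold leafb. apply Bool.not_true_iff_false. intros Hleaf.
  rewrite forallb_forall in Hleaf. specialize (Hleaf i).
  rewrite in_seq, E, Nat.eqb_refl in Hleaf. discriminate Hleaf. lia.
Qed.

(* Brothers share the tail, and the tail of a root link is a source node. *)
Lemma isRoot_brother i j : (i < m N)%nat -> ltail N j = ltail N i ->
  isRoot N i = false -> isRoot N j = false.
Proof.
  intros Hi Ej Hri. destruct HN as [_ [_ [_ [Hsrc [Hpar [Hcov _]]]]]].
  apply Bool.not_true_iff_false. intros Hrj. apply isRootP in Hrj as [k [Hk Ek]].
  destruct (Hcov i Hi) as [k' [Hk' Hin]].
  assert (Hne : i <> S N k').
  { intros ->. rewrite (proj2 (isRootP _)) in Hri by eauto. discriminate. }
  destruct (Hpar k' i Hk' Hin Hne) as [[Hpm [Hph _]] _].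
  apply (Hsrc k (par N k' i) Hk Hpm). rewrite Hph, Ek, Ej. reflexivity.
Qed.

Variables (nprobe : nat -> nat) (X : nat -> nat -> nat -> bool).

Local Notation nk1 := (nk1 N nprobe X).
Local Notation n1 := (n1 N nprobe X).
Local Notation n0 := (n0 N nprobe X).
Local Notation rr := (rr N nprobe X).

Lemma sum_parents_nk1 i k : (i < m N)%nat -> (k < K N)%nat ->
  sumR (m N) (fun l => if Nat.eqb (lhead N l) (ltail N i) then nk1 k l else 0) =
  if excluded_middle_informative (inE N k i /\ i <> S N k) then nk1 k (par N k i) else 0.
Proof.
  intros Hi Hk. destruct HN as [_ [_ [_ [Hsrc [Hpar _]]]]].
  destruct (excluded_middle_informative (inE N k i /\ i <> S N k)) as [[Hin Hne]|Hno].
  - destruct (Hpar k i Hk Hin Hne) as [[Hpm [Hph _]] Hpu].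
    rewrite <- (sumR_delta (m N) (par N k i) (nk1 k)) by exact Hpm.
    apply sumR_ext. intros l Hl. destruct (Nat.eqb_spec l (par N k i)) as [->|E].
    + rewrite Hph, Nat.eqb_refl. reflexivity.
    + destruct (Nat.eqb_spec (lhead N l) (ltail N i)) as [E2|]; [|reflexivity].
      unfold Defs.nk1. destruct (excluded_middle_informative (inE N k l)); [|reflexivity].
      exfalso. apply E, Hpu; assumption.
  - apply sumR_eq0. intros l Hl.
    destruct (Nat.eqb_spec (lhead N l) (ltail N i)) as [E2|]; [|reflexivity].
    unfold Defs.nk1. destruct (excluded_middle_informative (inE N k l)) as [Hl'|]; [|reflexivity].
    exfalso. assert (Hin : inE N k i).
    { eapply rt_trans; [exact Hl'|]. apply rt_step. repeat split; [exact Hl | exact Hi | congruence]. }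
    destruct (Nat.eq_dec i (S N k)) as [->|Hne]; [|apply Hno; split; assumption].
    exact (Hsrc k l Hk Hl E2).
Qed.

Lemma sum_parents_n1 i : (i < m N)%nat ->
  sumR (m N) (fun l => if Nat.eqb (lhead N l) (ltail N i) then n1 l else 0) =
  if isRoot N i then 0 else n1 i + n0 i.
Proof.
  intros Hi.
  transitivity (sumR (K N) (fun k =>
    sumR (m N) (fun l => if Nat.eqb (lhead N l) (ltail N i) then nk1 k l else 0))).
  { rewrite <- sumR_exchange. apply sumR_ext. intros l _. unfold Defs.n1.
    destruct (Nat.eqb (lhead N l) (ltail N i)); [reflexivity|]. rewrite sumR_eq0; reflexivity. }
  pose proof HN as [_ [_ [_ [_ [_ [_ Huniq]]]]]].
  destruct (isRoot N i) eqn:Hroot.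
  - apply isRootP in Hroot as [k0 [Hk0 <-]]. apply sumR_eq0. intros k Hk.
    rewrite sum_parents_nk1 by auto.
    destruct (excluded_middle_informative _) as [[Hin Hne]|]; [|reflexivity].
    rewrite (Huniq k0 k Hk0 Hk Hin) in Hne. contradiction.
  - assert (Hnr : forall k, (k < K N)%nat -> i <> S N k).
    { intros k Hk ->. rewrite (proj2 (isRootP _)) in Hroot by eauto. discriminate. }
    unfold Defs.n1, Defs.n0. rewrite <- sumR_add. apply sumR_ext. intros k Hk.
    rewrite sum_parents_nk1 by auto. unfold Defs.nk0.
    destruct (excluded_middle_informative (inE N k i)) as [Hin|Hin].
    + destruct (excluded_middle_informative _) as [_|C]; [|exfalso; apply C; auto].
      destruct (Nat.eqb_spec i (S N k)) as [E|]; [exfalso; apply (Hnr k Hk E)|ring].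
    + destruct (excluded_middle_informative _) as [[C _]|_]; [contradiction|].
      unfold Defs.nk1. destruct (excluded_middle_informative (inE N k i)); [contradiction|ring].
Qed.

Variable xi : nat -> R.
Hypothesis Hxi : InXi N xi.

Definition prodB_others i : R :=
  prodR (m N) (fun j => if Nat.eqb j i then 1
                        else if Nat.eqb (ltail N j) (ltail N i) then xi j else 1).

Lemma prodB_others_in_01 i : 0 < prodB_others i <= 1.
Proof.
  apply prodR_in_01. intros j Hj. destruct (Nat.eqb j i); [lra|].
  destruct (Nat.eqb (ltail N j) (ltail N i)); [|lra].
  destruct (Hxi j Hj) as [? _]. lra.
Qed.

Lemma prodB_split i : (i < m N)%nat -> prodB N xi i = xi i * prodB_others i.
Proof. intros Hi. unfold prodB. rewrite (prodR_extract _ i), Nat.eqb_refl by exact Hi. reflexivity. Qed.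

Lemma xi_prodB_others_lt1 i : (i < m N)%nat -> xi i * prodB_others i < 1.
Proof.
  intros Hi. destruct (Hxi i Hi) as [? _]. pose proof (prodB_others_in_01 i).
  assert (xi i * prodB_others i <= xi i * 1) by (apply Rmult_le_compat_l; lra). lra.
Qed.

Lemma prodC_lt1 l : (l < m N)%nat -> prodC N xi l < 1.
Proof.
  intros Hl. destruct (leafb N l) eqn:Hleaf.
  - unfold prodC. rewrite Hleaf. lra.
  - destruct (Hxi l Hl) as [? Hlt]. specialize (Hlt Hleaf). lra.
Qed.

Lemma prodC_upd_nonparent i x l : lhead N l <> ltail N i -> prodC N (upd xi i x) l = prodC N xi l.
Proof.
  intros H. unfold prodC. destruct (leafb N l); [reflexivity|]. apply prodR_ext. intros j _.
  unfold upd. destruct (Nat.eqb_spec j i) as [->|]; [|reflexivity].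
  destruct (Nat.eqb_spec (ltail N i) (lhead N l)); [congruence|reflexivity].
Qed.

Lemma prodC_upd_parent i x l : (i < m N)%nat -> lhead N l = ltail N i ->
  prodC N (upd xi i x) l = x * prodB_others i.
Proof.
  intros Hi H. unfold prodC. rewrite (leafb_parent l i) by auto.
  rewrite (prodR_extract _ i), H, Nat.eqb_refl by exact Hi. unfold upd at 1. rewrite Nat.eqb_refl.
  f_equal. apply prodR_ext. intros j _. unfold upd. destruct (Nat.eqb_spec j i); reflexivity.
Qed.

Definition loglik_term (f : nat -> R) l : R :=
  n1 l * ln ((1 - f l) / (1 - prodC N f l)) + n0 l * ln (f l).

Definition loglik_term_deriv i l : R :=
  (if Nat.eqb l i then - n1 i / (1 - xi i) + n0 i / xi i else 0)
  + (if Nat.eqb (lhead N l) (ltail N i)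
     then n1 l * (prodB_others i / (1 - xi i * prodB_others i)) else 0).

Lemma is_derive_loglik_term i l : (i < m N)%nat -> (l < m N)%nat ->
  is_derive (fun x => loglik_term (upd xi i x) l) (xi i) (loglik_term_deriv i l).
Proof.
  intros Hi Hl. unfold loglik_term_deriv, loglik_term.
  destruct (Nat.eqb_spec l i) as [->|Hli].
  - destruct (Nat.eqb_spec (lhead N i) (ltail N i)) as [E|_];
      [exfalso; exact (lhead_neq_ltail i Hi E)|].
    apply (is_derive_ext (fun x => n1 i * ln ((1 - x) / (1 - prodC N xi i)) + n0 i * ln x)).
    { intros x. rewrite prodC_upd_nonparent by exact (lhead_neq_ltail i Hi).
      unfold upd. rewrite Nat.eqb_refl. reflexivity. }
    destruct (Hxi i Hi) as [? _]. pose proof (prodC_lt1 i Hi).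
    auto_derive; [repeat split; try lra; apply Rdiv_lt_0_compat; lra | field; lra].
  - assert (Hu : forall x, upd xi i x l = xi l)
      by (intros; unfold upd; destruct (Nat.eqb_spec l i); congruence).
    destruct (Nat.eqb_spec (lhead N l) (ltail N i)) as [Hp|Hp].
    + apply (is_derive_ext (fun x => n1 l * ln ((1 - xi l) / (1 - x * prodB_others i))
                                     + n0 l * ln (xi l))).
      { intros x. rewrite prodC_upd_parent, Hu by auto. reflexivity. }
      destruct (Hxi l Hl) as [? _]. pose proof (xi_prodB_others_lt1 i Hi).
      auto_derive; [repeat split; try lra; apply Rdiv_lt_0_compat; lra | field; lra].
    + apply (is_derive_ext (fun _ => loglik_term xi l)).
      { intros x. unfold loglik_term. rewrite prodC_upd_nonparent, Hu by exact Hp. reflexivity. }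
      rewrite Rplus_0_r. apply (is_derive_const (V := R_NormedModule)).
Qed.

Definition score i : R :=
  - n1 i / (1 - xi i) + n0 i / xi i
  + (if isRoot N i then 0 else n1 i + n0 i) * (prodB_others i / (1 - xi i * prodB_others i)).

Lemma is_derive_loglik i : (i < m N)%nat ->
  is_derive (fun x => loglik N nprobe X (upd xi i x)) (xi i) (score i).
Proof.
  intros Hi.
  replace (score i) with (sumR (m N) (loglik_term_deriv i)).
  - apply (is_derive_sumR (m N) (fun l x => loglik_term (upd xi i x) l)).
    intros l Hl. apply is_derive_loglik_term; assumption.
  - unfold loglik_term_deriv, score. rewrite sumR_add, sumR_delta by exact Hi.
    rewrite <- sum_parents_n1, (Rmult_comm (sumR _ _)), <- sumR_mull by exact Hi. f_equal. apply sumR_ext. intros l _.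
    destruct (Nat.eqb (lhead N l) (ltail N i)); ring.
Qed.

Lemma stationary_iff_score : stationary N nprobe X xi <-> forall i, (i < m N)%nat -> score i = 0.
Proof.
  split; intros H i Hi.
  - pose proof (is_derive_unique _ _ _ (is_derive_loglik i Hi)) as Hscore.
    pose proof (is_derive_unique _ _ _ (proj2 (is_derive_Reals _ _ _) (H i Hi))) as H0.
    rewrite <- Hscore. exact H0.
  - apply is_derive_Reals. rewrite <- (H i Hi). apply is_derive_loglik; exact Hi.
Qed.

Lemma score_eq0_iff_fixed_point i : (i < m N)%nat -> n1 i + n0 i > 0 ->
  score i = 0 <-> xi i = (1 - rr i) + rr i * (if isRoot N i then 0 else 1) * prodB N xi i.
Proof.
  intros Hi Hpos. rewrite prodB_split by exact Hi. unfold score, Defs.rr.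
  destruct (Hxi i Hi) as [Hx _]. pose proof (prodB_others_in_01 i).
  pose proof (xi_prodB_others_lt1 i Hi).
  destruct (isRoot N i).
  - replace (0 * _) with ((n1 i + n0 i) * (0 / (1 - xi i * 0))) by (field; lra).
    replace (_ * 0 * _) with (n1 i / (n1 i + n0 i) * (xi i * 0)) by ring.
    apply score_eq0_iff; lra.
  - replace (_ * 1 * _) with (n1 i / (n1 i + n0 i) * (xi i * prodB_others i)) by ring.
    apply score_eq0_iff; lra.
Qed.

End Network.

Theorem mainTheorem6 (N : Net) (HN : valid_net N)
  (nprobe : nat -> nat) (X : nat -> nat -> nat -> bool) (xi : nat -> R)
  (Hpos : forall i, (i < m N)%nat -> n1 N nprobe X i + n0 N nprobe X i > 0)
  (Hxi : InXi N xi) :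
  (stationary N nprobe X xi <->
     forall i, (i < m N)%nat ->
       xi i = (1 - rr N nprobe X i)
              + rr N nprobe X i * (if isRoot N i then 0 else 1) * prodB N xi i)
  /\
  (stationary N nprobe X xi ->
     (forall k, (k < K N)%nat -> xi (S N k) = 1 - rr N nprobe X (S N k)) /\
     (forall i, (i < m N)%nat -> isRoot N i = false ->
        prodB N xi i =
        prodR (m N) (fun j => if Nat.eqb (ltail N j) (ltail N i)
                              then (1 - rr N nprobe X j) + rr N nprobe X j * prodB N xi i
                              else 1))).
Proof.
  assert (Hfix : stationary N nprobe X xi <->
     forall i, (i < m N)%nat ->
       xi i = (1 - rr N nprobe X i)
              + rr N nprobe X i * (if isRoot N i then 0 else 1) * prodB N xi i).
  { rewrite stationary_iff_score by assumption.
    split; intros H i Hi; apply score_eq0_iff_fixed_point; auto. }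
  split; [exact Hfix|]. intros Hs. pose proof (proj1 Hfix Hs) as H.
  pose proof HN as [_ [_ [HSm _]]]. split.
  - intros k Hk. rewrite (H (S N k)), (proj2 (isRootP N _)) by eauto. ring.
  - intros i Hi Hri. unfold prodB at 1. apply prodR_ext. intros j Hj.
    destruct (Nat.eqb_spec (ltail N j) (ltail N i)) as [E|]; [|reflexivity].
    rewrite (H j Hj) at 1. rewrite (isRoot_brother N HN i j Hi E Hri).
    replace (prodB N xi j) with (prodB N xi i) by (unfold prodB; rewrite E; reflexivity).
    ring.
Qed.
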